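(* Every absolutely flat (von Neumann regular) commutative ring $S$ has strong avoidance.
   Context: All rings are commutative with $1\neq 0$. A ring map $\phi:R\to S$ has avoidance if whenever $I,I_1,\ldots,I_n$ are ideals of $R$ with $I\subseteq\bigcup_{k=1}^n I_k$, then $IS\subseteq I_kS$ for some $k$ (where $IS$ denotes the extension of $I$ to $S$). A ring $S$ has strong avoidance if every ring map $R\to S$ has avoidance. *)

From HB Require Import structures.
From mathcomp Require Import all_boot all_order all_algebra.
Set Implicit Arguments. Unset Strict Implicit. Unset Printing Implicit Defensive.
Import GRing.Theory.
Local Open Scope ring_scope.

(* Commutative rings with 1 <> 0 are MathComp's [comNzRingType]. *)

Definition is_ideal (R : comNzRingType) (I : R -> Prop) : Prop :=
  [/\ I 0, (forall a b, I a -> I b -> I (a + b)) & (forall r a, I a -> I (r * a))].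

(* The extension IS of an ideal I of R along phi : R -> S: the ideal of S
   generated by phi(I), i.e. all finite S-linear combinations of images. *)
Definition ext_ideal (R S : comNzRingType) (phi : {rmorphism R -> S})
  (I : R -> Prop) : S -> Prop :=
  fun s => exists (n : nat) (a : 'I_n -> R) (c : 'I_n -> S),
    (forall i, I (a i)) /\ s = \sum_(i < n) c i * phi (a i).

Definition has_avoidance (R S : comNzRingType) (phi : {rmorphism R -> S}) : Prop :=
  forall (I : R -> Prop) (n : nat) (Is : 'I_n -> R -> Prop),
    is_ideal I -> (forall k, is_ideal (Is k)) ->
    (forall x, I x -> exists k, Is k x) ->
    exists k : 'I_n, forall s, ext_ideal phi I s -> ext_ideal phi (Is k) s.

Definition strong_avoidance (S : comNzRingType) : Prop :=
  forall (R : comNzRingType) (phi : {rmorphism R -> S}), has_avoidance phi.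

Definition von_neumann_regular (S : comNzRingType) : Prop :=
  forall a : S, exists x : S, a = a * a * x.

From mathcomp Require Import all_boot all_order all_algebra.
From mathcomp Require Import ring boolp.
From mathcomp Require classical_sets.
Set Implicit Arguments. Unset Strict Implicit. Unset Printing Implicit Defensive.
Import GRing.Theory.
Local Open Scope ring_scope.

(* Suppose that for every k some x_k in I has phi(x_k) outside I_k S. Every
   ideal of a von Neumann regular ring is radical, so no power of x_k lies in
   phi^-1(I_k S); by Krull's lemma some prime q_k of R contains I_k but not x_k.
   Prime avoidance then yields x in I lying in no q_k, hence in no I_k, which
   contradicts the covering of I by the I_k. *)

Section Ideals.
Variable R : comNzRingType.
Implicit Types (I q : R -> Prop) (a b r : R).

Definition prime_ideal q : Prop :=
  [/\ is_ideal q, ~ q 1 & forall a b, q (a * b) -> q a \/ q b].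

Lemma ideal0 I : is_ideal I -> I 0.
Proof. by case. Qed.

Lemma idealD I a b : is_ideal I -> I a -> I b -> I (a + b).
Proof. by case=> _ + _; apply. Qed.

Lemma idealMl I r a : is_ideal I -> I a -> I (r * a).
Proof. by case=> _ _; apply. Qed.

Lemma idealMr I r a : is_ideal I -> I a -> I (a * r).
Proof. by rewrite mulrC; apply: idealMl. Qed.

Lemma idealB I a b : is_ideal I -> I a -> I b -> I (a - b).
Proof.
by move=> I_ideal Ia Ib; apply: idealD; rewrite // -mulN1r; apply: idealMl.
Qed.

Lemma ideal_prod I n (f : 'I_n -> R) j : is_ideal I -> I (f j) -> I (\prod_i f i).
Proof. by move=> I_ideal Ifj; rewrite (bigD1 j) //=; apply: idealMr. Qed.

Lemma prime_ideal_prod q n (f : 'I_n -> R) :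
  prime_ideal q -> q (\prod_i f i) -> exists i, q (f i).
Proof.
case=> _ q1 q_prime; elim: n f => [|n IHn] f; first by rewrite big_ord0.
rewrite big_ord_recl => /q_prime[qf0|/IHn[i qfi]]; first by exists ord0.
by exists (lift ord0 i).
Qed.

Lemma prime_avoidance_sum m I (q : 'I_m.+2 -> R -> Prop) (y : 'I_m.+2 -> R) :
  is_ideal I -> (forall k, prime_ideal (q k)) -> (forall k, I (y k)) ->
  (forall i k, i != k -> ~ q k (y i)) -> (forall k, q k (y k)) ->
  I (y ord0 + \prod_(j < m.+1) y (lift ord0 j)) /\
  forall k, ~ q k (y ord0 + \prod_(j < m.+1) y (lift ord0 j)).
Proof.
move=> I_ideal q_prime Iy y_off y_on.
set p := \prod_(j < m.+1) _.
split=> [|k qz]; first by apply: idealD => //; apply: (ideal_prod (j := ord0)).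
have [q_ideal _ _] := q_prime k.
have [k0|/unlift_some[j k_lift _]] := eqVneq ord0 k.
  subst k; have qp : q ord0 p.
    by rewrite -[p](addKr (y ord0)) addrC; apply: idealB.
  have [j qyj] := prime_ideal_prod (q_prime ord0) qp.
  by apply: (y_off (lift ord0 j) ord0) => //; rewrite eq_sym neq_lift.
have qp : q k p by apply: (ideal_prod (j := j)); rewrite // -k_lift.
apply: (y_off ord0 k); first by rewrite k_lift neq_lift.
by rewrite -(addrK p (y ord0)); apply: idealB.
Qed.

Lemma prime_avoidance n I (q : 'I_n -> R -> Prop) :
  is_ideal I -> (forall k, prime_ideal (q k)) ->
  (forall k, exists x, I x /\ ~ q k x) ->
  exists x, I x /\ forall k, ~ q k x.
Proof.
elim: n q => [|[|m] IHn] q I_ideal q_prime Iq.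
- by exists 0; split; [apply: ideal0 | case].
- have [x [Ix qx]] := Iq ord0; exists x; split=> // k.
  by rewrite (ord1 k).
have [y y_spec] := choice (fun k : 'I_m.+2 =>
  IHn (fun j => q (lift k j)) I_ideal (fun j => q_prime _) (fun j => Iq _)).
have y_off i k : i != k -> ~ q k (y i).
  by case/unlift_some=> j -> _; apply: (y_spec i).2.
have [[k qyk]|y_diag] := pselect (exists k, ~ q k (y k)).
  exists (y k); split=> [|j]; first exact: (y_spec k).1.
  by have [<-|] := eqVneq k j; last exact: y_off.
exists (y ord0 + \prod_(j < m.+1) y (lift ord0 j)).
apply: (@prime_avoidance_sum m I q y) => // [k|k]; first exact: (y_spec k).1.
by apply: contrapT => qyk; apply: y_diag; exists k.
Qed.

Definition ideal_adjoin I a : R -> Prop :=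
  fun r => exists u c, I u /\ r = u + c * a.

Lemma ideal_adjoin_is_ideal I a : is_ideal I -> is_ideal (ideal_adjoin I a).
Proof.
move=> I_ideal; split.
- by exists 0, 0; rewrite mul0r addr0; split=> //; apply: ideal0.
- move=> _ _ [u [c [Iu ->]]] [v [d [Iv ->]]].
  by exists (u + v), (c + d); split; [apply: idealD | ring].
- move=> r _ [u [c [Iu ->]]].
  by exists (r * u), (r * c); split; [apply: idealMl | ring].
Qed.

Lemma ideal_adjoin_sub I a r : I r -> ideal_adjoin I a r.
Proof. by move=> Ir; exists r, 0; rewrite mul0r addr0. Qed.

Lemma ideal_adjoin_gen I a : is_ideal I -> ideal_adjoin I a a.
Proof.
by move=> I_ideal; exists 0, 1; rewrite add0r mul1r; split=> //; apply: ideal0.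
Qed.

Section PrimeAvoidingPowers.
Variables (K : R -> Prop) (x : R).
Hypothesis K_ideal : is_ideal K.

Definition avoids_powers I := forall m, ~ I (x ^+ m).

Let admissible I := [/\ is_ideal I, (forall a, K a -> I a) & avoids_powers I].

Let admissible_chain_bigcup (F : (R -> Prop) -> Prop) :
  (forall I, F I -> forall r, I r -> admissible I) ->
  classical_sets.total_on F classical_sets.subset ->
  forall r, classical_sets.bigcup F id r -> admissible (classical_sets.bigcup F id).
Proof.
move=> F_adm F_chain r [I0 FI0 I0r].
have [I0_ideal KI0 _] := F_adm I0 FI0 r I0r.
split; last 2 first.
- by move=> a Ka; exists I0 => //; apply: KI0.
- by move=> m [I FI Ix]; have [_ _ I_avoids] := F_adm I FI _ Ix; apply: I_avoids Ix.
split; first by exists I0 => //; apply: ideal0.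
- move=> a b [I FI Ia] [J FJ Jb].
  have [IJ|JI] := F_chain I J FI FJ.
    have [J_ideal _ _] := F_adm J FJ b Jb.
    by exists J => //; apply: idealD => //; apply: IJ.
  have [I_ideal _ _] := F_adm I FI a Ia.
  by exists I => //; apply: idealD => //; apply: JI.
- move=> s a [I FI Ia]; have [I_ideal _ _] := F_adm I FI a Ia.
  by exists I => //; apply: idealMl.
Qed.

(* Zorn is applied to the sets that are empty or admissible, so that the empty
   chain has an upper bound. *)
Let exists_maximal_admissible : avoids_powers K ->
  exists A, admissible A /\ forall B, admissible B -> (forall a, A a -> B a) ->
    forall a, B a -> A a.
Proof.
move=> K_avoids.
pose P I := forall r, I r -> admissible I.
have [A [PA A_max]] : exists A, P A /\ forall B, classical_sets.proper A B -> ~ P B.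
  apply: classical_sets.Zorn_bigcup => F FP F_chain r Fr.
  exact: (admissible_chain_bigcup FP F_chain Fr).
have PK : P K by move=> _ _; split.
have [A0|/existsNP[a /contrapT Aa]] := pselect (forall a, ~ A a).
  suff: classical_sets.proper A K by move/A_max.
  by split=> [a /A0 //|KA]; apply: (A0 0); apply: KA; apply: ideal0.
exists A; split=> [|B B_adm AB b Bb]; first exact: PA Aa.
apply: contrapT => Ab; apply: (A_max B); last by move=> ? _.
by split=> // BA; apply: Ab; apply: BA.
Qed.

Lemma prime_ideal_avoiding_powers : avoids_powers K ->
  exists q, [/\ prime_ideal q, forall a, K a -> q a & ~ q x].
Proof.
move=> /exists_maximal_admissible[A [[A_ideal KA A_avoids] A_max]].
have power_in_adjoin a : ~ A a -> exists m, ideal_adjoin A a (x ^+ m).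
  move=> Aa; apply: contrapT => no_power; apply: Aa.
  apply: (A_max (ideal_adjoin A a)); last exact: ideal_adjoin_gen.
  - split; first exact: ideal_adjoin_is_ideal.
      by move=> r /KA; apply: ideal_adjoin_sub.
    by move=> m xm; apply: no_power; exists m.
  - by move=> r; apply: ideal_adjoin_sub.
exists A; split=> //; last by move=> Ax; apply: (A_avoids 1%N); rewrite expr1.
split=> // [A1|a b Aab]; first by apply: (A_avoids 0%N); rewrite expr0.
apply: contrapT => /not_orP[/power_in_adjoin[m [u [c [Au xm]]]]].
move=> /power_in_adjoin[l [v [d [Av xl]]]].
apply: (A_avoids (m + l)%N); rewrite exprD xm xl.
have -> : (u + c * a) * (v + d * b) =
          u * (v + d * b) + v * (c * a) + (c * d) * (a * b) by ring.
by do 2?apply: (idealD A_ideal); [apply: idealMr|apply: idealMr|apply: idealMl].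
Qed.

End PrimeAvoidingPowers.

End Ideals.

Section Extension.
Variables (R S : comNzRingType) (phi : {rmorphism R -> S}).
Implicit Types (I : R -> Prop) (J : S -> Prop).

Lemma ext_ideal_is_ideal I : is_ideal (ext_ideal phi I).
Proof.
split.
- by exists 0%N, (fun=> 0), (fun=> 0); split=> [[]//|]; rewrite big_ord0.
- move=> _ _ [n1 [a1 [c1 [Ia1 ->]]]] [n2 [a2 [c2 [Ia2 ->]]]].
  pose glue T (f1 : 'I_n1 -> T) (f2 : 'I_n2 -> T) i :=
    match split i with inl i => f1 i | inr i => f2 i end.
  exists (n1 + n2)%N, (glue _ a1 a2), (glue _ c1 c2).
  split=> [i|]; first by rewrite /glue; case: (split i).
  have glue_l i : split (lshift n2 i) = inl i := unsplitK (inl _ i).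
  have glue_r i : split (rshift n1 i) = inr i := unsplitK (inr _ i).
  rewrite big_split_ord /=.
  by congr (_ + _); apply: eq_bigr => i _; rewrite /glue ?glue_l ?glue_r.
- move=> r _ [n [a [c [Ia ->]]]]; exists n, a, (fun i => r * c i); split=> //.
  by rewrite mulr_sumr; apply: eq_bigr => i _; rewrite mulrA.
Qed.

Lemma ext_ideal_image I a : I a -> ext_ideal phi I (phi a).
Proof.
by move=> Ia; exists 1%N, (fun=> a), (fun=> 1); rewrite big_ord1 mul1r.
Qed.

Lemma ext_ideal_min I J : is_ideal J -> (forall a, I a -> J (phi a)) ->
  forall s, ext_ideal phi I s -> J s.
Proof.
move=> J_ideal IJ _ [n [a [c [Ia ->]]]].
elim/big_ind: _ => [|s t|i _]; [exact: ideal0 | exact: idealD | ].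
exact: idealMl J_ideal (IJ _ (Ia i)).
Qed.

Lemma preim_is_ideal J : is_ideal J -> is_ideal (fun r => J (phi r)).
Proof.
move=> J_ideal; split=> [|a b|r a]; rewrite ?rmorph0 ?rmorphD ?rmorphM.
- exact: ideal0.
- exact: idealD.
- exact: idealMl.
Qed.

Lemma prime_ideal_over_radical_preim J x :
  is_ideal J -> (forall s m, J (s ^+ m) -> J s) -> ~ J (phi x) ->
  exists q, [/\ prime_ideal q, forall a, J (phi a) -> q a & ~ q x].
Proof.
move=> J_ideal J_radical Jx; apply: prime_ideal_avoiding_powers.
  exact: preim_is_ideal.
by move=> m; rewrite rmorphXn => /J_radical.
Qed.

End Extension.

Lemma von_neumann_regular_radical (S : comNzRingType) (J : S -> Prop) s m :
  von_neumann_regular S -> is_ideal J -> J (s ^+ m) -> J s.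
Proof.
move=> S_vnr J_ideal; have [y s_eq] := S_vnr s.
have s_pow k : s = s ^+ k.+1 * y ^+ k.
  elim: k => [|k IHk]; first by rewrite expr1 expr0 mulr1.
  by rewrite {1}s_eq {1}IHk !exprS; ring.
case: m => [|k] Jsk; last by rewrite (s_pow k); apply: idealMr.
by rewrite -(mulr1 s) -(expr0 s); apply: idealMl.
Qed.

Theorem proposition4p3 (S : comNzRingType) :
  von_neumann_regular S -> strong_avoidance S.
Proof.
move=> S_vnr R phi I n Is I_ideal Is_ideal I_cover.
apply: contrapT => no_k.
have outside k : exists x, I x /\ ~ ext_ideal phi (Is k) (phi x).
  apply: contrapT => all_inside; apply: no_k; exists k.
  apply: ext_ideal_min; first exact: ext_ideal_is_ideal.
  by move=> a Ia; apply: contrapT => Na; apply: all_inside; exists a.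
have primes k : exists q, prime_ideal q /\
    (forall a, Is k a -> q a) /\ exists x, I x /\ ~ q x.
  have [x [Ix Nx]] := outside k.
  have [q [q_prime Jq qx]] := prime_ideal_over_radical_preim
    (ext_ideal_is_ideal phi (Is k))
    (fun s m => von_neumann_regular_radical S_vnr (ext_ideal_is_ideal _ _)) Nx.
  exists q; split=> //; split; last by exists x.
  by move=> a /(ext_ideal_image phi)/Jq.
have [q q_spec] := choice primes.
have [x [Ix qx]] :=
  prime_avoidance I_ideal (fun k => (q_spec k).1) (fun k => (q_spec k).2.2).
have [k Isx] := I_cover x Ix.
exact: qx k ((q_spec k).2.1 x Isx).
Qed.
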